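(* Let $(M,\omega)$ be a Hermitian manifold with $\Lambda_\omega\partial\bar\partial\omega=0$. Then $$2\mathfrak R^{(1)}-\Theta^{(1)}\leq \Theta^{(2)}$$ as Hermitian $(1,1)$-forms on $M$. Moreover, equality holds if and only if $\omega$ is Kähler.
   Context: Write $\omega=\sqrt{-1}h_{i\bar j}dz^i\wedge d\bar z^j$ in local holomorphic coordinates. Chern curvature: $\Theta_{i\bar j k\bar \ell}=-\frac{\partial^2 h_{k\bar \ell}}{\partial z^i\partial \bar z^j}+h^{p\bar q}\frac{\partial h_{p\bar \ell}}{\partial \bar z^j}\frac{\partial h_{k\bar q}}{\partial z^i}$; first Chern-Ricci curvature $\Theta^{(1)}=\sqrt{-1}h^{k\bar\ell}\Theta_{i\bar jk\bar\ell}dz^i\wedge d\bar z^j$; second Chern-Ricci curvature $\Theta^{(2)}=\sqrt{-1}h^{k\bar\ell}\Theta_{k\bar\ell i\bar j}dz^i\wedge d\bar z^j$. The Levi-Civita connection of the underlying Riemannian metric induces a connection $\nabla^{\mathrm{LC}}$ on $T^{1,0}M$ (projection of the $\mathbb C$-linearly extended Levi-Civita connection onto $T^{1,0}M$), given by $\nabla^{\mathrm{LC}}_{\partial/\partial z^i}\frac{\partial}{\partial z^k}=\Gamma_{ik}^p\frac{\partial}{\partial z^p}$ and $\nabla^{\mathrm{LC}}_{\partial/\partial\bar z^j}\frac{\partial}{\partial z^k}=\Gamma_{\bar jk}^p\frac{\partial}{\partial z^p}$, where $\Gamma_{ij}^k=\frac12h^{k\bar\ell}\left(\frac{\partial h_{j\bar\ell}}{\partial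 z^i}+\frac{\partial h_{i\bar\ell}}{\partial z^j}\right)$ and $\Gamma_{\bar ij}^k=\frac12h^{k\bar\ell}\left(\frac{\partial h_{j\bar\ell}}{\partial\bar z^i}-\frac{\partial h_{j\bar i}}{\partial\bar z^\ell}\right)$. Its curvature has $(1,1)$-components $\mathfrak R_{i\bar jk}^\ell=-\left(\frac{\partial\Gamma^\ell_{ik}}{\partial\bar z^j}-\frac{\partial\Gamma^\ell_{\bar jk}}{\partial z^i}+\Gamma^s_{ik}\Gamma^\ell_{\bar js}-\Gamma^s_{\bar jk}\Gamma^\ell_{is}\right)$, and $\mathfrak R^{(1)}=\sqrt{-1}\mathfrak R_{i\bar jk}^kdz^i\wedge d\bar z^j$. $\Lambda_\omega$ is the adjoint of $L\phi=\omega\wedge\phi$. The inequality $A\le B$ means $B-A$ is a positive semi-definite Hermitian $(1,1)$-form. *)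

From HB Require Import structures.
From mathcomp Require Import all_boot all_order all_algebra.
From mathcomp Require Import all_classical all_reals all_analysis.
From mathcomp Require Import complex.
Set Implicit Arguments. Unset Strict Implicit. Unset Printing Implicit Defensive.
Import Order.TTheory GRing.Theory Num.Theory.
Import numFieldNormedType.Exports.
Local Open Scope classical_set_scope.
Local Open Scope ring_scope.
Local Open Scope complex_scope.

(* A point of an open subset of C^n is encoded by its real coordinates
   (x_1..x_n, y_1..y_n) in 'rV[R]_(n + n), with z^k = x^k + i y^k. *)
Definition rdir (R : realType) (n : nat) (j : 'I_(n + n)) : 'rV[R]_(n + n) :=
  delta_mx 0 j.

Definition pD (R : realType) (n : nat) (j : 'I_(n + n))
  (g : 'rV[R]_(n + n) -> R) : 'rV[R]_(n + n) -> R :=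
  fun p => 'D_(@rdir R n j) g p.

Definition iterD (R : realType) (n : nat) (s : seq 'I_(n + n))
  (g : 'rV[R]_(n + n) -> R) : 'rV[R]_(n + n) -> R :=
  foldr (fun j f => pD j f) g s.

Definition smooth_on (R : realType) (n : nat) (U : set 'rV[R]_(n + n))
  (g : 'rV[R]_(n + n) -> R) : Prop :=
  forall (s : seq 'I_(n + n)) (p : 'rV[R]_(n + n)), U p ->
    differentiable (iterD s g) p.

Definition cD (R : realType) (n : nat) (j : 'I_(n + n))
  (F : 'rV[R]_(n + n) -> R[i]) (p : 'rV[R]_(n + n)) : R[i] :=
  (pD j (fun q => @complex.Re R (F q)) p) +i* (pD j (fun q => @complex.Im R (F q)) p).

(* Wirtinger derivatives d/dz^k = (d/dx^k - i d/dy^k)/2, d/dzbar^k *)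
Definition dz (R : realType) (n : nat) (k : 'I_n)
  (F : 'rV[R]_(n + n) -> R[i]) : 'rV[R]_(n + n) -> R[i] :=
  fun p => (cD (lshift n k) F p - 'i * cD (rshift n k) F p) / 2%:R.

Definition dzb (R : realType) (n : nat) (k : 'I_n)
  (F : 'rV[R]_(n + n) -> R[i]) : 'rV[R]_(n + n) -> R[i] :=
  fun p => (cD (lshift n k) F p + 'i * cD (rshift n k) F p) / 2%:R.

Section Metric.
Variables (R : realType) (n : nat) (h : 'rV[R]_(n + n) -> 'M[R[i]]_n).

Definition hent (i j : 'I_n) : 'rV[R]_(n + n) -> R[i] := fun p => h p i j.

(* h^{k lbar}, characterized by sum_l h^{k lbar} h_{m lbar} = delta_{km} *)
Definition hup (k l : 'I_n) : 'rV[R]_(n + n) -> R[i] :=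
  fun p => invmx (h p) l k.

Definition Theta (i j k l : 'I_n) (p : 'rV[R]_(n + n)) : R[i] :=
  - dz i (dzb j (hent k l)) p
  + \sum_(a < n) \sum_(b < n)
      hup a b p * dzb j (hent a l) p * dz i (hent k b) p.

(* first and second Chern-Ricci curvatures (coefficient of sqrt(-1) dz^i /\ dzbar^j) *)
Definition Theta1 (i j : 'I_n) (p : 'rV[R]_(n + n)) : R[i] :=
  \sum_(k < n) \sum_(l < n) hup k l p * Theta i j k l p.

Definition Theta2 (i j : 'I_n) (p : 'rV[R]_(n + n)) : R[i] :=
  \sum_(k < n) \sum_(l < n) hup k l p * Theta k l i j p.

(* Gam i j k = Gamma_{ij}^k ; Gamb i j k = Gamma_{ibar j}^k *)
Definition Gam (i j k : 'I_n) : 'rV[R]_(n + n) -> R[i] :=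
  fun p => (1 / 2%:R) * \sum_(l < n)
     hup k l p * (dz i (hent j l) p + dz j (hent i l) p).

Definition Gamb (i j k : 'I_n) : 'rV[R]_(n + n) -> R[i] :=
  fun p => (1 / 2%:R) * \sum_(l < n)
     hup k l p * (dzb i (hent j l) p - dzb l (hent j i) p).

(* LC curvature (1,1)-components  Rc i j k l = frak R_{i jbar k}^l *)
Definition Rc (i j k l : 'I_n) (p : 'rV[R]_(n + n)) : R[i] :=
  - (dzb j (Gam i k l) p - dz i (Gamb j k l) p
     + \sum_(s < n) Gam i k s p * Gamb j s l p
     - \sum_(s < n) Gamb j k s p * Gam i s l p).

Definition R1 (i j : 'I_n) (p : 'rV[R]_(n + n)) : R[i] :=
  \sum_(k < n) Rc i j k k p.

(* coefficients of ddbar omega before antisymmetrization: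
   ddb k i l j = d_k dbar_l h_{i jbar}; then the totally antisymmetrized
   (2,2)-coefficient and its contraction with omega (= Lambda_omega up to a
   nonzero constant factor). *)
Definition ddb (k i l j : 'I_n) (p : 'rV[R]_(n + n)) : R[i] :=
  dz k (dzb l (hent i j)) p.

Definition ddbA (k i l j : 'I_n) (p : 'rV[R]_(n + n)) : R[i] :=
  ddb k i l j p - ddb i k l j p - ddb k i j l p + ddb i k j l p.

Definition Lambda_ddbar (i j : 'I_n) (p : 'rV[R]_(n + n)) : R[i] :=
  \sum_(k < n) \sum_(l < n) hup k l p * ddbA k i l j p.

End Metric.

Definition psd (R : realType) (n : nat) (a : 'I_n -> 'I_n -> R[i]) : Prop :=
  forall v : 'I_n -> R[i],
    0 <= \sum_(i < n) \sum_(j < n) a i j * v i * conjc (v j).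

Definition hermitian_metric (R : realType) (n : nat) (U : set 'rV[R]_(n + n))
  (h : 'rV[R]_(n + n) -> 'M[R[i]]_n) : Prop :=
  (forall i j : 'I_n, smooth_on U (fun p => @complex.Re R (h p i j)) /\
                      smooth_on U (fun p => @complex.Im R (h p i j))) /\
  (forall p, U p ->
     (forall i j : 'I_n, h p j i = conjc (h p i j)) /\
     (forall v : 'I_n -> R[i], (exists i, v i != 0) ->
        0 < \sum_(i < n) \sum_(j < n) h p i j * v i * conjc (v j))).

Definition Lddbar_zero (R : realType) (n : nat) (U : set 'rV[R]_(n + n))
  (h : 'rV[R]_(n + n) -> 'M[R[i]]_n) : Prop :=
  forall p, U p -> forall i j : 'I_n, Lambda_ddbar h i j p = 0.

(* omega is Kaehler on U: d omega = 0, i.e. d omega^{2,1} = 0 and d omega^{1,2} = 0 *)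
Definition kahler_on (R : realType) (n : nat) (U : set 'rV[R]_(n + n))
  (h : 'rV[R]_(n + n) -> 'M[R[i]]_n) : Prop :=
  forall p, U p -> forall i j k : 'I_n,
    dz k (hent h i j) p = dz i (hent h k j) p /\
    dzb k (hent h i j) p = dzb j (hent h i k) p.

(* At a point, Theta2 - (2 R1 - Theta1) is a universal expression in the
   2-jet of h: expanding the Christoffel symbols and their derivatives with
   d(h^-1) = - h^-1 (dh) h^-1 and the symmetry of mixed partials gives
     Theta2 - (2 R1 - Theta1) = Q - Lambda ddbar omega,
   where Q_{i jbar} = h^{k lbar} h^{q mbar} T_{ikm} conj(T_{jlq}) and
   T_{ikm} = d_i h_{k mbar} - d_k h_{i mbar} is the torsion of omega.  When
   Lambda ddbar omega = 0 the defect is Q, a Hermitian square for the positive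
   metric h^-1 (x) h^-1: it is semi-definite and vanishes exactly when T = 0,
   i.e. when d omega = 0. *)

From Pilot Require Import Defs.
From HB Require Import structures.
From mathcomp Require Import all_boot all_order all_algebra.
From mathcomp Require Import all_classical all_reals all_analysis.
From mathcomp Require Import complex.
From mathcomp Require Import ring lra.
Import Order.TTheory GRing.Theory Num.Theory.
Import numFieldNormedType.Exports.
Local Open Scope classical_set_scope.
Local Open Scope ring_scope.

Set Implicit Arguments. Unset Strict Implicit.

(* The 2-jet of a metric at a point: G a b = h^{a bbar}, A a b c = d_c h_{a bbar},
   B a b c = dbar_c h_{a bbar} and C a b c d = d_c dbar_d h_{a bbar}.  The _jet
   quantities are the curvature expressions of Defs in these terms, with
   dGz_jet, dGzb_jet the derivatives of h^{-1}, i.e. - h^{-1} (dh) h^{-1}. *)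
Section CurvatureJets.
Variables (K : numFieldType) (n : nat).
Variables (G : 'I_n -> 'I_n -> K) (A B : 'I_n -> 'I_n -> 'I_n -> K).
Variable C : 'I_n -> 'I_n -> 'I_n -> 'I_n -> K.

Definition Theta_jet i j k l :=
  - C k l i j + \sum_(a < n) \sum_(b < n) G a b * B a l j * A k b i.
Definition Theta1_jet i j := \sum_(k < n) \sum_(l < n) G k l * Theta_jet i j k l.
Definition Theta2_jet i j := \sum_(k < n) \sum_(l < n) G k l * Theta_jet k l i j.

Definition Gam_jet i j k := 1 / 2%:R * \sum_(l < n) G k l * (A j l i + A i l j).
Definition Gamb_jet i j k := 1 / 2%:R * \sum_(l < n) G k l * (B j l i - B j i l).

Definition dGz_jet i k l := - \sum_(a < n) \sum_(m < n) G k a * A m a i * G m l.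
Definition dGzb_jet j k l := - \sum_(a < n) \sum_(m < n) G k a * B m a j * G m l.

Definition dzb_Gam_jet j i k l := 1 / 2%:R * \sum_(m < n)
  (dGzb_jet j l m * (A k m i + A i m k) + G l m * (C k m i j + C i m k j)).
Definition dz_Gamb_jet i j k l := 1 / 2%:R * \sum_(m < n)
  (dGz_jet i l m * (B k m j - B k j m) + G l m * (C k m i j - C k j i m)).

Definition Rc_jet i j k l := - (dzb_Gam_jet j i k l - dz_Gamb_jet i j k l
  + \sum_(s < n) Gam_jet i k s * Gamb_jet j s l
  - \sum_(s < n) Gamb_jet j k s * Gam_jet i s l).
Definition R1_jet i j := \sum_(k < n) Rc_jet i j k k.

Definition Lambda_jet i j := \sum_(k < n) \sum_(l < n)
  G k l * (C i j k l - C k j i l - C i l k j + C k l i j).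

Definition torsion_sq_jet i j := \sum_(k < n) \sum_(l < n) \sum_(q < n) \sum_(m < n)
  G k l * G q m * (A k m i - A i m k) * (B q l j - B q j l).

Lemma exchange_sum4 (F : 'I_n -> 'I_n -> 'I_n -> 'I_n -> K) :
  \sum_(k < n) \sum_(m < n) \sum_(a < n) \sum_(b < n) F k m a b =
  \sum_(b < n) \sum_(m < n) \sum_(k < n) \sum_(a < n) F k m a b.
Proof.
rewrite exchange_big /=.
under eq_bigr => m _ do under eq_bigr => k _ do rewrite exchange_big /=.
under eq_bigr => m _ do rewrite exchange_big /=.
by rewrite exchange_big.
Qed.

Lemma sum_dGzb_jet j (Y : 'I_n -> 'I_n -> K) :
  \sum_(k < n) \sum_(m < n) dGzb_jet j k m * Y k m
  = - \sum_(k < n) \sum_(l < n) \sum_(q < n) \sum_(m < n) G k l * G q m * Y k m * B q l j.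
Proof.
rewrite -sumrN; apply: eq_bigr => k _.
have -> : \sum_(m < n) dGzb_jet j k m * Y k m
    = - \sum_(m < n) \sum_(a < n) \sum_(b < n) G k a * G b m * Y k m * B b a j.
  rewrite -sumrN; apply: eq_bigr => m _; rewrite /dGzb_jet mulNr mulr_suml; congr (- _).
  by apply: eq_bigr => a _; rewrite mulr_suml; apply: eq_bigr => b _; ring.
by congr (- _); rewrite exchange_big; apply: eq_bigr => a _; rewrite exchange_big.
Qed.

Lemma sum_dGz_jet i (Y : 'I_n -> 'I_n -> K) :
  \sum_(k < n) \sum_(m < n) dGz_jet i k m * Y k m
  = - \sum_(k < n) \sum_(l < n) \sum_(q < n) \sum_(m < n) G k l * G q m * A k m i * Y q l.
Proof.
have -> : \sum_(k < n) \sum_(m < n) dGz_jet i k m * Y k m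
    = - \sum_(k < n) \sum_(m < n) \sum_(a < n) \sum_(b < n) G k a * A b a i * G b m * Y k m.
  rewrite -sumrN; apply: eq_bigr => k _; rewrite -sumrN; apply: eq_bigr => m _.
  rewrite /dGz_jet mulNr mulr_suml; congr (- _).
  by apply: eq_bigr => a _; rewrite mulr_suml.
rewrite exchange_sum4; congr (- _).
by do 4!(apply: eq_bigr => ? _); ring.
Qed.

Variables i j : 'I_n.

Let q1 := \sum_(k < n) \sum_(l < n) \sum_(q < n) \sum_(m < n) G k l * G q m * A k m i * B q l j.
Let q2 := \sum_(k < n) \sum_(l < n) \sum_(q < n) \sum_(m < n) G k l * G q m * A k m i * B q j l.
Let q3 := \sum_(k < n) \sum_(l < n) \sum_(q < n) \sum_(m < n) G k l * G q m * A i m k * B q l j.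
Let q4 := \sum_(k < n) \sum_(l < n) \sum_(q < n) \sum_(m < n) G k l * G q m * A i m k * B q j l.
Let c1 := \sum_(k < n) \sum_(l < n) G k l * C i j k l.
Let c2 := \sum_(k < n) \sum_(l < n) G k l * C k j i l.
Let c3 := \sum_(k < n) \sum_(l < n) G k l * C i l k j.
Let c4 := \sum_(k < n) \sum_(l < n) G k l * C k l i j.

Let Theta1_jetE : Theta1_jet i j = q1 - c4.
Proof.
rewrite /Theta1_jet /q1 /c4 -sumrB; apply: eq_bigr => k _; rewrite -sumrB.
apply: eq_bigr => l _; rewrite /Theta_jet mulrDr mulrN addrC; congr (_ - _).
rewrite mulr_sumr; apply: eq_bigr => a _; rewrite mulr_sumr; apply: eq_bigr => b _.
by ring.
Qed.

Let Theta2_jetE : Theta2_jet i j = q4 - c1.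
Proof.
rewrite /Theta2_jet /q4 /c1 -sumrB; apply: eq_bigr => k _; rewrite -sumrB.
apply: eq_bigr => l _; rewrite /Theta_jet mulrDr mulrN addrC; congr (_ - _).
rewrite mulr_sumr; apply: eq_bigr => a _; rewrite mulr_sumr; apply: eq_bigr => b _.
by ring.
Qed.

Let torsion_sq_jetE : torsion_sq_jet i j = q1 - q2 - q3 + q4.
Proof.
rewrite /torsion_sq_jet /q1 /q2 /q3 /q4.
do 4!(rewrite -!sumrB -big_split /=; apply: eq_bigr => ? _).
by ring.
Qed.

Let Lambda_jetE : Lambda_jet i j = c1 - c2 - c3 + c4.
Proof.
rewrite /Lambda_jet /c1 /c2 /c3 /c4.
do 2!(rewrite -!sumrB -big_split /=; apply: eq_bigr => ? _).
by ring.
Qed.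

Let R1_jet_dGam : R1_jet i j = - \sum_(k < n) (dzb_Gam_jet j i k k - dz_Gamb_jet i j k k).
Proof.
have -> : R1_jet i j = - (\sum_(k < n) (dzb_Gam_jet j i k k - dz_Gamb_jet i j k k)
    + (\sum_(k < n) \sum_(s < n) Gam_jet i k s * Gamb_jet j s k
       - \sum_(k < n) \sum_(s < n) Gamb_jet j k s * Gam_jet i s k)).
  rewrite /R1_jet /Rc_jet sumrN; congr (- _).
  by rewrite -sumrB -big_split /=; apply: eq_bigr => k _; rewrite addrA.
rewrite [X in X - _]exchange_big /=.
under [X in X - _]eq_bigr do under eq_bigr do rewrite mulrC.
by rewrite subrr addr0.
Qed.

Let sum_dGam_jet : \sum_(k < n) (dzb_Gam_jet j i k k - dz_Gamb_jet i j k k)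
  = 1 / 2%:R * (c2 + c3 - q2 - q3).
Proof.
have -> : \sum_(k < n) (dzb_Gam_jet j i k k - dz_Gamb_jet i j k k) =
  1 / 2%:R * \sum_(k < n) \sum_(m < n)
    (dGzb_jet j k m * A k m i + dGzb_jet j k m * A i m k - dGz_jet i k m * B k m j
     + dGz_jet i k m * B k j m + G k m * C i m k j + G k m * C k j i m).
  rewrite mulr_sumr; apply: eq_bigr => k _.
  rewrite /dzb_Gam_jet /dz_Gamb_jet -mulrBr -sumrB; congr (_ * _).
  by apply: eq_bigr => m _; ring.
under eq_bigr do rewrite !big_split /= sumrN.
rewrite !big_split /= sumrN.
rewrite !sum_dGzb_jet !sum_dGz_jet -/q1 -/q2 -/q3 -/c2 -/c3.
by congr (_ * _); ring.
Qed.

Lemma Theta_defect_jet : Theta2_jet i j - (2%:R * R1_jet i j - Theta1_jet i j)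
  = torsion_sq_jet i j - Lambda_jet i j.
Proof.
rewrite R1_jet_dGam sum_dGam_jet Theta1_jetE Theta2_jetE torsion_sq_jetE Lambda_jetE.
have two_neq0 : (2%:R : K) != 0 by rewrite pnatr_eq0.
by field.
Qed.

End CurvatureJets.

Section HilbertSchmidt.
Local Open Scope sesquilinear_scope.
Variables (C : numClosedFieldType) (n : nat) (H : 'M[C]_n).
Hypothesis H_herm : forall i j, H j i = (H i j)^*.
Hypothesis H_pos : forall v : 'I_n -> C, (exists i, v i != 0) ->
  0 < \sum_(i < n) \sum_(j < n) H i j * v i * (v j)^*.

(* the Hilbert-Schmidt product \tr (invmx H *m S *m invmx H *m S' ^t* ) *)
Definition hs_dot (S S' : 'I_n -> 'I_n -> C) :=
  \sum_(k < n) \sum_(l < n) \sum_(q < n) \sum_(m < n)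
    invmx H l k * invmx H m q * S k m * (S' l q)^*.

Let P := spectralmx H.
Let d := spectral_diag H.

Let P_unitary : P \is unitarymx. Proof. exact: spectral_unitarymx. Qed.
Let PPt : P *m P ^t* = 1%:M. Proof. exact/unitarymxP. Qed.
Let PtP : P ^t* *m P = 1%:M.
Proof. by rewrite -(invmx_unitary P_unitary) mulVmx // unitarymx_unit. Qed.

Let H_diag : H = P ^t* *m diag_mx d *m P.
Proof.
have H_normal : H \is normalmx.
  by apply/normalmxP; congr (_ *m _); apply/matrixP => i j; rewrite !mxE H_herm conjCK.
by rewrite {1}(orthomx_spectralP H_normal) invmx_unitary.
Qed.

Let d_gt0 a : 0 < d 0 a.
Proof.
have -> : d 0 a = (P *m H *m P ^t*) a a.
  by rewrite H_diag !mulmxA PPt mul1mx -mulmxA PPt mulmx1 mxE eqxx mulr1n.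
have -> : (P *m H *m P ^t*) a a = \sum_(i < n) \sum_(j < n) H i j * P a i * (P a j)^*.
  rewrite mxE; under eq_bigr => j _ do rewrite mxE mulr_suml.
  rewrite exchange_big /=; apply: eq_bigr => i _; apply: eq_bigr => j _.
  by rewrite !mxE; ring.
apply: H_pos; apply/existsP; apply: contraT; rewrite negb_exists => /forallP P0.
have : (P *m P ^t*) a a = 1 by rewrite PPt mxE eqxx.
rewrite mxE big1 => [/eqP|i _]; first by rewrite eq_sym oner_eq0.
by move: (P0 i); rewrite negbK => /eqP ->; rewrite mul0r.
Qed.

Let e := \row_(a < n) (d 0 a)^-1.

Let invH_diag : H *m (P ^t* *m diag_mx e *m P) = 1%:M.
Proof.
have De : diag_mx d *m diag_mx e = 1%:M.
  apply/matrixP => a b; rewrite mul_diag_mx !mxE.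
  by case: eqVneq => [->|]; rewrite ?mulr0n ?mulr0 // !mulr1n mulfV // gt_eqF.
rewrite H_diag !mulmxA -[_ *m P *m P ^t*]mulmxA PPt mulmx1.
by rewrite -[_ *m diag_mx d *m diag_mx e]mulmxA De mulmx1 PtP.
Qed.

Lemma posdef_unitmx : H \in unitmx.
Proof. by case: (mulmx1_unit invH_diag). Qed.

Let invH : invmx H = P ^t* *m diag_mx e *m P.
Proof. by rewrite -[invmx H]mulmx1 -invH_diag !mulmxA mulVmx ?posdef_unitmx // mul1mx. Qed.

Let hs_dot_diag S (Z := P *m \matrix_(k, m) S k m *m P ^t*) :
  hs_dot S S = \sum_(a < n) \sum_(b < n) (e 0 a * e 0 b) * (Z a b * (Z a b)^*).
Proof.
set Sm := \matrix_(k, m) S k m.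
have -> : hs_dot S S = \tr (invmx H *m Sm *m invmx H *m Sm ^t*).
  transitivity (\sum_(l < n) \sum_(q < n) \sum_(m < n) \sum_(k < n)
      invmx H l k * invmx H m q * S k m * (S l q)^*).
    rewrite /hs_dot exchange_big /=; apply: eq_bigr => l _.
    by rewrite exchange_big /=; apply: eq_bigr => q _; rewrite exchange_big.
  apply: eq_bigr => l _; rewrite mxE; apply: eq_bigr => q _.
  rewrite !mxE mulr_suml; apply: eq_bigr => m _; rewrite !mxE !mulr_suml.
  by apply: eq_bigr => k _; rewrite !mxE; ring.
rewrite invH.
have -> : P ^t* *m diag_mx e *m P *m Sm *m (P ^t* *m diag_mx e *m P) *m Sm ^t*
    = P ^t* *m (diag_mx e *m Z *m diag_mx e *m P *m Sm ^t*) by rewrite /Z !mulmxA.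
rewrite mxtrace_mulC.
have -> : diag_mx e *m Z *m diag_mx e *m P *m Sm ^t* *m P ^t*
    = diag_mx e *m Z *m diag_mx e *m Z ^t* by rewrite /Z !trmx_mul !map_mxM trmxCK !mulmxA.
rewrite /mxtrace; apply: eq_bigr => a _; rewrite mxE; apply: eq_bigr => b _.
by rewrite mul_mx_diag mul_diag_mx !mxE; ring.
Qed.

Let e_gt0 a : 0 < e 0 a. Proof. by rewrite mxE invr_gt0. Qed.

Let term_ge0 (Z : 'M[C]_n) a b : 0 <= e 0 a * e 0 b * (Z a b * (Z a b)^*).
Proof. by rewrite mulr_ge0 ?mul_conjC_ge0 // mulr_ge0 // ltW. Qed.

Lemma hs_dot_ge0 S : 0 <= hs_dot S S.
Proof. by rewrite hs_dot_diag; do 2!(apply: sumr_ge0 => ? _); exact: term_ge0. Qed.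

Lemma hs_dot_eq0 S : hs_dot S S = 0 -> forall k m, S k m = 0.
Proof.
set Sm := \matrix_(k, m) S k m; set Z := P *m Sm *m P ^t*.
rewrite hs_dot_diag -/Sm -/Z => S0.
have Z0 : Z = 0.
  apply/matrixP => a b; rewrite [RHS]mxE; apply/eqP.
  have row0 : \sum_(b < n) e 0 a * e 0 b * (Z a b * (Z a b)^*) = 0.
    by apply: (psumr_eq0P _ S0) => // a' _; apply: sumr_ge0 => b' _; exact: term_ge0.
  have /eqP : e 0 a * e 0 b * (Z a b * (Z a b)^*) = 0.
    by apply: (psumr_eq0P _ row0) => // b' _; exact: term_ge0.
  by rewrite mulf_eq0 mul_conjC_eq0 mulf_eq0 (gt_eqF (e_gt0 a)) (gt_eqF (e_gt0 b)).
have : Sm = P ^t* *m Z *m P by rewrite /Z !mulmxA PtP mul1mx -mulmxA PtP mulmx1.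
by rewrite Z0 mulmx0 mul0mx => /matrixP S0' k m; move: (S0' k m); rewrite !mxE.
Qed.

Let exchange_big_out (F : 'I_n -> 'I_n -> 'I_n -> 'I_n -> 'I_n -> C) :
  \sum_(k < n) \sum_(l < n) \sum_(q < n) \sum_(m < n) \sum_(x < n) F k l q m x =
  \sum_(x < n) \sum_(k < n) \sum_(l < n) \sum_(q < n) \sum_(m < n) F k l q m x.
Proof.
under eq_bigr do under eq_bigr do under eq_bigr do rewrite exchange_big /=.
under eq_bigr do under eq_bigr do rewrite exchange_big /=.
by under eq_bigr do rewrite exchange_big /=; rewrite exchange_big.
Qed.

Lemma hs_dot_comb (T : 'I_n -> 'I_n -> 'I_n -> C) (v : 'I_n -> C)
    (S := fun k m => \sum_(i < n) v i * T i k m) :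
  hs_dot S S = \sum_(i < n) \sum_(j < n) hs_dot (T i) (T j) * v i * (v j)^*.
Proof.
transitivity (\sum_(k < n) \sum_(l < n) \sum_(q < n) \sum_(m < n) \sum_(i < n) \sum_(j < n)
    invmx H l k * invmx H m q * (v i * T i k m) * (v j * T j l q)^*).
  do 4!(apply: eq_bigr => ? _).
  rewrite rmorph_sum -mulrA big_distrlr mulr_sumr; apply: eq_bigr => i _.
  by rewrite mulr_sumr; apply: eq_bigr => j _; rewrite /= !mulrA.
rewrite exchange_big_out; apply: eq_bigr => i _.
rewrite exchange_big_out; apply: eq_bigr => j _.
rewrite /hs_dot -mulrA mulr_suml.
do 3!(apply: eq_bigr => ? _; rewrite mulr_suml); apply: eq_bigr => ? _.
by rewrite rmorphM; ring.
Qed.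

End HilbertSchmidt.

Section SecondDerivativeSymmetry.
Variables (R : realType) (V : normedModType R).
Implicit Types (f : V -> R) (p q a b : V) (s t : R).

Lemma differentiable_remainder_le f p : differentiable f p ->
  forall eps : R, 0 < eps -> exists2 d : R, 0 < d &
    forall u : V, `|u| < d -> `|f (u + p) - f p - 'd f p u| <= eps * `|u|.
Proof.
move=> /diff_locally /eqaddoP fo eps eps0.
have /nbhs_ballP [d /= d0 Hd] := fo eps eps0; exists d => // u ud.
have := Hd u; rewrite -ball_normE /= sub0r normrN => /(_ ud).
by rewrite /= opprD addrA.
Qed.

Lemma is_derive_line f q a t : derivable f (q + t *: a) a ->
  is_derive t 1 (fun s => f (q + s *: a)) ('D_a f (q + t *: a)).
Proof.
have quotE : (fun h : R => h^-1 *: (((fun s => f (q + s *: a)) \o shift t) (h *: 1)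
                                     - f (q + t *: a)))
           = (fun h : R => h^-1 *: ((f \o shift (q + t *: a)) (h *: a) - f (q + t *: a))).
  by apply/funext => h /=; rewrite scaler1 scalerDl addrCA.
by move=> fa; split; [rewrite /derivable quotE | rewrite /derive quotE].
Qed.

Lemma continuous_line f q a t : {for q + t *: a, continuous f} ->
  {for t, continuous (fun s => f (q + s *: a))}.
Proof.
move=> fc; apply: (continuous_comp (f := fun s => q + s *: a)) => //.
apply: (@continuousD _ _ _ (cst q) (fun s => s *: a)); first exact: cvg_cst.
by apply: continuousZ; [exact: cvg_id | exact: cvg_cst].
Qed.

Definition second_diff f p a b s :=
  f (p + s *: a + s *: b) - f (p + s *: a) - f (p + s *: b) + f p.

Lemma second_diffC f p a b s : second_diff f p a b s = second_diff f p b a s.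
Proof. by rewrite /second_diff [p + s *: a + _]addrAC; congr (_ + _); exact: addrAC. Qed.

Lemma second_diff_MVT f p a b (r s : R) : 0 < s -> s * (`|a| + `|b|) < r ->
  (forall x, `|x - p| < r -> differentiable f x) ->
  exists2 c, c \in `]0, s[ &
    second_diff f p b a s = s * ('D_a f (p + s *: b + c *: a) - 'D_a f (p + c *: a)).
Proof.
move=> s0 sr fd.
have on_segment t : 0 <= t -> t <= s ->
    differentiable f (p + s *: b + t *: a) /\ differentiable f (p + t *: a).
  move=> t0 ts.
  have ta : `|t *: a| <= s * `|a| by rewrite normrZ ger0_norm // ler_wpM2r.
  have sb : `|s *: b| = s * `|b| by rewrite normrZ gtr0_norm.
  split; apply: fd.
    rewrite -[p + _ + _]addrA addrC addrK; apply: le_lt_trans (ler_normD _ _) _.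
    by rewrite sb (le_lt_trans _ sr) // mulrDr addrC lerD2r.
  rewrite addrAC subrr add0r; apply: le_lt_trans ta _; apply: le_lt_trans sr.
  by rewrite ler_pM2l // lerDl.
pose g t := f (p + s *: b + t *: a) - f (p + t *: a).
have [c cs gc] : exists2 c, c \in `]0, s[ &
    g s - g 0 = ('D_a f (p + s *: b + c *: a) - 'D_a f (p + c *: a)) * (s - 0).
  apply: MVT => // [x|].
    rewrite in_itv /= => /andP[x0 xs].
    have [d1 d2] := on_segment x (ltW x0) (ltW xs).
    by apply: is_deriveB; apply: is_derive_line; apply: diff_derivable.
  apply: continuous_in_subspaceT => x; rewrite inE /= in_itv /= => /andP[x0 xs].
  have [d1 d2] := on_segment x x0 xs.
  by apply: continuousB; apply: continuous_line; apply: differentiable_continuous.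
exists c => //; rewrite subr0 in gc; rewrite mulrC -gc /g /second_diff !scale0r !addr0.
by ring.
Qed.

Lemma second_diff_approx f p a b : (\forall x \near p, differentiable f x) ->
  differentiable ('D_a f) p -> forall eps : R, 0 < eps ->
  exists2 d : R, 0 < d & forall s, 0 < s -> s < d ->
    `|second_diff f p b a s - s ^+ 2 * 'D_b ('D_a f) p| <= s ^+ 2 * eps.
Proof.
move=> /nbhs_ballP[r /= r0 fd] Dfd eps eps0.
have fd' x : `|x - p| < r -> differentiable f x.
  by move=> xp; apply: fd; rewrite -ball_normE /= distrC.
pose K := `|a| + `|b| + 1.
have K0 : 0 < K by rewrite ltr_pwDr.
have eps'0 : 0 < eps / (K *+ 2) by rewrite divr_gt0 // mulrn_wgt0.
have [d0 d00 Dfo] := differentiable_remainder_le Dfd eps'0.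
exists (Num.min r d0 / K); first by rewrite divr_gt0 // lt_min r0.
move=> s s0; rewrite ltr_pdivlMr // lt_min => /andP[sr sd0].
have sK : s * (`|a| + `|b|) <= s * K by rewrite ler_pM2l // lerDl.
have [c] := second_diff_MVT s0 (le_lt_trans sK sr) fd'.
rewrite in_itv /= => /andP[c0 cs] ->.
have u1K : `|s *: b + c *: a| <= s * K.
  apply: le_trans _ sK; apply: le_trans (ler_normD _ _) _.
  rewrite normrZ gtr0_norm // mulrDr [s * `|a| + _]addrC lerD2l.
  by rewrite normrZ gtr0_norm // ler_wpM2r // ltW.
have u2K : `|c *: a| <= s * K.
  apply: le_trans _ sK; rewrite normrZ gtr0_norm // mulrDr.
  have : c * `|a| <= s * `|a| by rewrite ler_wpM2r // ltW.
  have : 0 <= s * `|b| by rewrite mulr_ge0 // ltW.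
  lra.
set e := eps / (K *+ 2) in eps'0 Dfo.
have epsE : eps = e * (K *+ 2) by rewrite /e divfK // gt_eqF // mulrn_wgt0.
have lin : 'd ('D_a f) p (s *: b + c *: a) = s * 'D_b ('D_a f) p + 'd ('D_a f) p (c *: a).
  by rewrite linearD linearZ /= (deriveE b Dfd).
have -> : s * ('D_a f (p + s *: b + c *: a) - 'D_a f (p + c *: a)) - s ^+ 2 * 'D_b ('D_a f) p
    = s * (('D_a f (s *: b + c *: a + p) - 'D_a f p - 'd ('D_a f) p (s *: b + c *: a))
         - ('D_a f (c *: a + p) - 'D_a f p - 'd ('D_a f) p (c *: a))).
  by rewrite lin -[p + s *: b + c *: a]addrA [p + (_ + _)]addrC [p + c *: a]addrC; ring.
rewrite normrM gtr0_norm // expr2 -mulrA ler_pM2l //.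
apply: le_trans (ler_normB _ _) _.
apply: le_trans (lerD (Dfo _ (le_lt_trans u1K sd0)) (Dfo _ (le_lt_trans u2K sd0))) _.
rewrite -mulrDr epsE mulrCA ler_pM2l // mulrnAr mulr2n.
exact: lerD.
Qed.

(* Both sides are limits of second_diff f p a b s / s^2 as s -> 0+. *)
Lemma derive_comm f p a b : (\forall x \near p, differentiable f x) ->
  differentiable ('D_a f) p -> differentiable ('D_b f) p ->
  'D_b ('D_a f) p = 'D_a ('D_b f) p.
Proof.
move=> fd Dafd Dbfd; apply/eqP; rewrite -subr_eq0 -normr_le0.
apply/ler_addgt0Pr => e e0; rewrite add0r.
have e20 : 0 < e / 2 by rewrite divr_gt0.
have [da da0 Ha] := second_diff_approx b fd Dafd e20.
have [db db0 Hb] := second_diff_approx a fd Dbfd e20.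
pose s := Num.min da db / 2.
have s0 : 0 < s by rewrite divr_gt0 // lt_min da0.
have : s < Num.min da db by rewrite ltr_pdivrMr // ltr_pMr ?ltr1n // lt_min da0.
rewrite lt_min => /andP[sa sb].
have := Ha s s0 sa; have := Hb s s0 sb; rewrite second_diffC.
set D := second_diff f p b a s => HbD HaD.
have : s ^+ 2 * `|'D_b ('D_a f) p - 'D_a ('D_b f) p| <= s ^+ 2 * e.
  have diffE (x y d : R) : s ^+ 2 * (x - y) = (d - s ^+ 2 * y) - (d - s ^+ 2 * x).
    by ring.
  rewrite -{1}(ger0_norm (sqr_ge0 s)) -normrM (diffE _ _ D).
  apply: le_trans (ler_normB _ _) _.
  by rewrite (splitr e) mulrDr; exact: lerD HbD HaD.
by rewrite ler_pM2l // exprn_gt0.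
Qed.

End SecondDerivativeSymmetry.

Local Open Scope complex_scope.

Section ComplexParts.
Variable R : realType.
Implicit Types x y : R[i].

Local Notation Re := complex.Re.
Local Notation Im := complex.Im.

Lemma Re_add x y : Re (x + y) = Re x + Re y. Proof. by case: x => ? ?; case: y. Qed.
Lemma Im_add x y : Im (x + y) = Im x + Im y. Proof. by case: x => ? ?; case: y. Qed.
Lemma Re_opp x : Re (- x) = - Re x. Proof. by case: x. Qed.
Lemma Im_opp x : Im (- x) = - Im x. Proof. by case: x. Qed.
Lemma Re_mul x y : Re (x * y) = Re x * Re y - Im x * Im y.
Proof. by case: x => ? ?; case: y. Qed.
Lemma Im_mul x y : Im (x * y) = Re x * Im y + Im x * Re y.
Proof. by case: x => ? ?; case: y. Qed.
Lemma Re_conj x : Re (conjc x) = Re x. Proof. by case: x. Qed.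
Lemma Im_conj x : Im (conjc x) = - Im x. Proof. by case: x. Qed.
Lemma Re_inv x : Re x^-1 = Re x / (Re x ^+ 2 + Im x ^+ 2). Proof. by case: x. Qed.
Lemma Im_inv x : Im x^-1 = - (Im x / (Re x ^+ 2 + Im x ^+ 2)). Proof. by case: x. Qed.

Lemma complexP x y : Re x = Re y -> Im x = Im y -> x = y.
Proof. by case: x; case: y => /= ? ? ? ? -> ->. Qed.

Lemma sqr_Re_Im_eq0 x : (Re x ^+ 2 + Im x ^+ 2 == 0) = (x == 0).
Proof. by case: x => a b; rewrite paddr_eq0 ?sqr_ge0 // !sqrf_eq0 eq_complex. Qed.

End ComplexParts.

Section ComplexDerivative.
Variables (R : realType) (V : normedModType R).
Implicit Types (F G : V -> R[i]) (p v : V).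
Local Notation re F := (fun q => complex.Re (F q)).
Local Notation im F := (fun q => complex.Im (F q)).

Definition cderive v F p : R[i] := 'D_v (re F) p +i* 'D_v (im F) p.

Definition cderivable F p :=
  forall v, derivable (re F) p v /\ derivable (im F) p v.

Definition cdifferentiable F p :=
  differentiable (re F) p /\ differentiable (im F) p.

Lemma cdifferentiable_cderivable F p : cdifferentiable F p -> cderivable F p.
Proof. by move=> [dre dim] v; split; exact: diff_derivable. Qed.

Let reD F G : re (fun q => F q + G q) = re F + re G.
Proof. by apply/funext => q; rewrite Re_add. Qed.
Let imD F G : im (fun q => F q + G q) = im F + im G.
Proof. by apply/funext => q; rewrite Im_add. Qed.
Let reN F : re (fun q => - F q) = - re F.
Proof. by apply/funext => q; rewrite Re_opp. Qed.
Let imN F : im (fun q => - F q) = - im F.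
Proof. by apply/funext => q; rewrite Im_opp. Qed.
Let reM F G : re (fun q => F q * G q) = re F * re G - im F * im G.
Proof. by apply/funext => q; rewrite Re_mul. Qed.
Let imM F G : im (fun q => F q * G q) = re F * im G + im F * re G.
Proof. by apply/funext => q; rewrite Im_mul. Qed.
Let reJ F : re (fun q => conjc (F q)) = re F.
Proof. by apply/funext => q; rewrite Re_conj. Qed.
Let imJ F : im (fun q => conjc (F q)) = - im F.
Proof. by apply/funext => q; rewrite Im_conj. Qed.

Let deriveMr (f g : V -> R) p v : derivable f p v -> derivable g p v ->
  'D_v (f * g) p = f p * 'D_v g p + g p * 'D_v f p.
Proof. by move=> df dg; rewrite (deriveM df dg). Qed.

Section Rules.
Variable p : V.

Lemma cderivable_cst c : cderivable (fun _ => c) p.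
Proof. by move=> v; split; exact: derivable_cst. Qed.

Lemma cderivableD F G : cderivable F p -> cderivable G p ->
  cderivable (fun q => F q + G q) p.
Proof.
move=> dF dG v; have [f1 f2] := dF v; have [g1 g2] := dG v.
by rewrite reD imD; split; [exact: derivableD f1 g1 | exact: derivableD f2 g2].
Qed.

Lemma cderivableN F : cderivable F p -> cderivable (fun q => - F q) p.
Proof.
move=> dF v; have [f1 f2] := dF v.
by rewrite reN imN; split; [exact: derivableN f1 | exact: derivableN f2].
Qed.

Lemma cderivableB F G : cderivable F p -> cderivable G p ->
  cderivable (fun q => F q - G q) p.
Proof. by move=> dF dG; apply: cderivableD dF (cderivableN dG). Qed.

Lemma cderivableM F G : cderivable F p -> cderivable G p ->
  cderivable (fun q => F q * G q) p.
Proof.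
move=> dF dG v; have [f1 f2] := dF v; have [g1 g2] := dG v.
rewrite reM imM; split; first exact: derivableB (derivableM f1 g1) (derivableM f2 g2).
exact: derivableD (derivableM f1 g2) (derivableM f2 g1).
Qed.

Lemma cderivableV F : F p != 0 -> cderivable F p -> cderivable (fun q => (F q)^-1) p.
Proof.
move=> Fp0 dF v; have [f1 f2] := dF v.
pose N := re F * re F + im F * im F.
have dN : derivable (fun q => (N q)^-1) p v.
  apply: derivableV; first by rewrite /N /= -!expr2 sqr_Re_Im_eq0.
  exact: derivableD (derivableM f1 f1) (derivableM f2 f2).
have reV : re (fun q => (F q)^-1) = re F * (fun q => (N q)^-1).
  by apply/funext => q; rewrite Re_inv /N /= -!expr2.
have imV : im (fun q => (F q)^-1) = - (im F * (fun q => (N q)^-1)).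
  by apply/funext => q; rewrite Im_inv /N /= -!expr2.
by rewrite reV imV; split; [exact: derivableM f1 dN | exact: derivableN (derivableM f2 dN)].
Qed.

Lemma cderivable_sum (I : Type) (r : seq I) (P : pred I) (F : I -> V -> R[i]) :
  (forall i, cderivable (F i) p) -> cderivable (fun q => \sum_(i <- r | P i) F i q) p.
Proof.
move=> dF; elim: r => [|a r IH].
  by under eq_fun do rewrite big_nil; exact: cderivable_cst.
under eq_fun do rewrite big_cons.
by case: (P a); [exact: cderivableD (dF a) IH | exact: IH].
Qed.

Lemma cderivable_prod (I : Type) (r : seq I) (P : pred I) (F : I -> V -> R[i]) :
  (forall i, cderivable (F i) p) -> cderivable (fun q => \prod_(i <- r | P i) F i q) p.
Proof.
move=> dF; elim: r => [|a r IH].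
  by under eq_fun do rewrite big_nil; exact: cderivable_cst.
under eq_fun do rewrite big_cons.
by case: (P a); [exact: cderivableM (dF a) IH | exact: IH].
Qed.

Lemma cderivable_det m (M : V -> 'M[R[i]]_m) :
  (forall i j, cderivable (fun q => M q i j) p) -> cderivable (fun q => \det (M q)) p.
Proof.
move=> dM; apply: cderivable_sum => s.
by apply: cderivableM; [exact: cderivable_cst | exact: cderivable_prod].
Qed.

Lemma near_eq_cderivable F G : (\forall q \near p, F q = G q) ->
  cderivable F p -> cderivable G p.
Proof.
move=> FG dF v; have [f1 f2] := dF v.
by split; apply: near_eq_derivable; [|exact: f1| |exact: f2]; near=> q; rewrite (near FG q).
Unshelve. all: by end_near.
Qed.

Lemma cderive_cst v c : cderive v (fun _ => c) p = 0.
Proof. by rewrite /cderive !derive_cst. Qed.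

Lemma cderiveD v F G : cderivable F p -> cderivable G p ->
  cderive v (fun q => F q + G q) p = cderive v F p + cderive v G p.
Proof.
move=> dF dG; have [f1 f2] := dF v; have [g1 g2] := dG v.
by rewrite /cderive reD imD (deriveD f1 g1) (deriveD f2 g2).
Qed.

Lemma cderiveN v F : cderivable F p ->
  cderive v (fun q => - F q) p = - cderive v F p.
Proof.
move=> dF; have [f1 f2] := dF v.
by rewrite /cderive reN imN (deriveN f1) (deriveN f2).
Qed.

Lemma cderiveB v F G : cderivable F p -> cderivable G p ->
  cderive v (fun q => F q - G q) p = cderive v F p - cderive v G p.
Proof. by move=> dF dG; rewrite (cderiveD _ dF (cderivableN dG)) (cderiveN _ dG). Qed.

Lemma cderiveM v F G : cderivable F p -> cderivable G p ->
  cderive v (fun q => F q * G q) p = cderive v F p * G p + F p * cderive v G p.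
Proof.
move=> dF dG; have [f1 f2] := dF v; have [g1 g2] := dG v.
rewrite /cderive reM imM (deriveB (derivableM f1 g1) (derivableM f2 g2)).
rewrite (deriveD (derivableM f1 g2) (derivableM f2 g1)).
rewrite (deriveMr f1 g1) (deriveMr f2 g2) (deriveMr f1 g2) (deriveMr f2 g1) /=.
move: ('D_v (re F) p) ('D_v (im F) p) ('D_v (re G) p) ('D_v (im G) p) => a b c d.
by case: (F p) (G p) => [x y] [z w]; apply: complexP => /=; ring.
Qed.

Lemma cderiveJ v F : cderivable F p ->
  cderive v (fun q => conjc (F q)) p = conjc (cderive v F p).
Proof. by move=> dF; have [_ f2] := dF v; rewrite /cderive reJ imJ (deriveN f2). Qed.

Lemma cderive_sum v (I : Type) (r : seq I) (P : pred I) (F : I -> V -> R[i]) :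
  (forall i, cderivable (F i) p) ->
  cderive v (fun q => \sum_(i <- r | P i) F i q) p = \sum_(i <- r | P i) cderive v (F i) p.
Proof.
move=> dF; elim: r => [|a r IH].
  by under eq_fun do rewrite big_nil; rewrite big_nil cderive_cst.
under eq_fun do rewrite big_cons.
rewrite big_cons; case: (P a) => //.
by rewrite cderiveD ?IH //; exact: cderivable_sum.
Qed.

Lemma near_eq_cderive v F G : (\forall q \near p, F q = G q) ->
  cderive v F p = cderive v G p.
Proof.
move=> FG; rewrite /cderive (@near_eq_derive _ _ _ (re F) (re G)).
  rewrite (@near_eq_derive _ _ _ (im F) (im G)) //.
  by near=> q; rewrite (near FG q).
by near=> q; rewrite (near FG q).
Unshelve. all: by end_near.
Qed.

End Rules.

Lemma cderive_comm F p a b : (\forall q \near p, cdifferentiable F q) ->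
  cdifferentiable (cderive a F) p -> cdifferentiable (cderive b F) p ->
  cderive a (cderive b F) p = cderive b (cderive a F) p.
Proof.
move=> dF [da1 da2] [db1 db2]; rewrite /cderive /=.
have dre : \forall q \near p, differentiable (re F) q by apply: filterS dF => q [].
have dim : \forall q \near p, differentiable (im F) q by apply: filterS dF => q [].
by rewrite (derive_comm dre db1 da1) (derive_comm dim db2 da2).
Qed.

End ComplexDerivative.

Section Wirtinger.
Variables (R : realType) (V : normedModType R).
Implicit Types (F G : V -> R[i]) (a b p v : V) (c : R[i]).

Definition wirtinger a b c F p : R[i] := (cderive a F p + c * cderive b F p) / 2%:R.

Section Rules.
Variables (a b : V) (c : R[i]) (p : V).

Lemma wirtinger_cst z : wirtinger a b c (fun _ => z) p = 0.
Proof. by rewrite /wirtinger !cderive_cst mulr0 addr0 mul0r. Qed.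

Lemma wirtingerD F G : cderivable F p -> cderivable G p ->
  wirtinger a b c (fun q => F q + G q) p = wirtinger a b c F p + wirtinger a b c G p.
Proof.
move=> dF dG; rewrite /wirtinger (cderiveD _ dF dG) (cderiveD _ dF dG).
by rewrite -mulrDl mulrDr addrACA.
Qed.

Lemma wirtingerB F G : cderivable F p -> cderivable G p ->
  wirtinger a b c (fun q => F q - G q) p = wirtinger a b c F p - wirtinger a b c G p.
Proof.
move=> dF dG; rewrite /wirtinger (cderiveB _ dF dG) (cderiveB _ dF dG).
by rewrite -mulrBl mulrBr addrACA opprD.
Qed.

Lemma wirtingerM F G : cderivable F p -> cderivable G p ->
  wirtinger a b c (fun q => F q * G q) p
    = wirtinger a b c F p * G p + F p * wirtinger a b c G p.
Proof.
move=> dF dG; rewrite /wirtinger (cderiveM _ dF dG) (cderiveM _ dF dG).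
move: (cderive a F p) (cderive a G p) (cderive b F p) (cderive b G p) (F p) (G p).
by move=> x1 x2 x3 x4 x5 x6; ring.
Qed.

Lemma wirtingerMl z F : cderivable F p ->
  wirtinger a b c (fun q => z * F q) p = z * wirtinger a b c F p.
Proof.
move=> dF; rewrite (wirtingerM (cderivable_cst p z) dF).
by rewrite wirtinger_cst mul0r add0r.
Qed.

Lemma wirtinger_sum (I : Type) (r : seq I) (P : pred I) (F : I -> V -> R[i]) :
  (forall i, cderivable (F i) p) ->
  wirtinger a b c (fun q => \sum_(i <- r | P i) F i q) p
    = \sum_(i <- r | P i) wirtinger a b c (F i) p.
Proof.
move=> dF; rewrite /wirtinger !cderive_sum // mulr_sumr -big_split /= mulr_suml.
by apply: eq_bigr.
Qed.

Lemma near_eq_wirtinger F G : (\forall q \near p, F q = G q) ->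
  wirtinger a b c F p = wirtinger a b c G p.
Proof. by move=> FG; rewrite /wirtinger !(near_eq_cderive _ FG). Qed.

Lemma wirtingerJ F : cderivable F p ->
  wirtinger a b (conjc c) (fun q => conjc (F q)) p = conjc (wirtinger a b c F p).
Proof.
move=> dF; rewrite /wirtinger !cderiveJ //.
by rewrite rmorphM rmorphD rmorphM fmorphV rmorph_nat.
Qed.

End Rules.

(* a weak C^2 condition: what the symmetry of mixed derivatives along D needs *)
Definition cdifferentiable2 (D : set V) F p :=
  (\forall q \near p, cdifferentiable F q) /\
  forall v, D v -> cdifferentiable (cderive v F) p.

Section SecondOrder.
Variables (D : set V) (F : V -> R[i]) (p : V).
Hypothesis dF : cdifferentiable2 D F p.

Lemma cdifferentiable2_cderivable : cderivable F p.
Proof. by apply: cdifferentiable_cderivable; case: dF => /nbhs_singleton. Qed.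

Lemma cderivable_cderive v : D v -> cderivable (cderive v F) p.
Proof. by move=> Dv; apply: cdifferentiable_cderivable; case: dF => _; apply. Qed.

Lemma cderivable_wirtinger a b c : D a -> D b -> cderivable (wirtinger a b c F) p.
Proof.
move=> Da Db; apply: cderivableM (cderivable_cst _ _).
apply: cderivableD (cderivable_cderive Da) _.
exact: cderivableM (cderivable_cst _ _) (cderivable_cderive Db).
Qed.

Lemma cderive_wirtinger v a b c : D a -> D b ->
  cderive v (wirtinger a b c F) p
    = (cderive v (cderive a F) p + c * cderive v (cderive b F) p) / 2%:R.
Proof.
move=> /cderivable_cderive dFa /cderivable_cderive dFb.
have dcFb := cderivableM (cderivable_cst p c) dFb.
rewrite (cderiveM _ (cderivableD dFa dcFb) (cderivable_cst _ _)) cderive_cst mulr0 addr0.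
by rewrite (cderiveD _ dFa dcFb) (cderiveM _ (cderivable_cst _ _) dFb) cderive_cst mul0r add0r.
Qed.

Lemma wirtinger_comm a1 b1 c1 a2 b2 c2 : D a1 -> D b1 -> D a2 -> D b2 ->
  wirtinger a1 b1 c1 (wirtinger a2 b2 c2 F) p
    = wirtinger a2 b2 c2 (wirtinger a1 b1 c1 F) p.
Proof.
move=> Da1 Db1 Da2 Db2.
have comm v w : D v -> D w -> cderive v (cderive w F) p = cderive w (cderive v F) p.
  by move=> Dv Dw; case: dF => dFn dDF; apply: cderive_comm; [exact: dFn | exact: dDF..].
rewrite [wirtinger a1 b1 c1 _ p]/wirtinger [wirtinger a2 b2 c2 _ p]/wirtinger.
rewrite (cderive_wirtinger a1 c2 Da2 Db2) (cderive_wirtinger b1 c2 Da2 Db2).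
rewrite (cderive_wirtinger a2 c1 Da1 Db1) (cderive_wirtinger b2 c1 Da1 Db1).
rewrite (comm _ _ Da1 Da2) (comm _ _ Da1 Db2) (comm _ _ Db1 Da2) (comm _ _ Db1 Db2).
move: (cderive a2 (cderive a1 F) p) (cderive b2 (cderive a1 F) p).
move: (cderive a2 (cderive b1 F) p) (cderive b2 (cderive b1 F) p) => x1 x2 x3 x4.
by ring.
Qed.

End SecondOrder.
End Wirtinger.

Section InverseMatrix.
Variables (R : realType) (V : normedModType R) (n : nat).
Variables (M : V -> 'M[R[i]]_n) (p : V).
Hypothesis M_unit : \forall q \near p, M q \in unitmx.
Hypothesis dM : forall i j, cderivable (fun q => M q i j) p.

Let Mp_unit : M p \in unitmx. Proof. exact: nbhs_singleton M_unit. Qed.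

Lemma cderivable_invmx i j : cderivable (fun q => invmx (M q) i j) p.
Proof.
pose adj q := (-1) ^+ (j + i) * \det (row' j (col' i (M q))).
apply: (@near_eq_cderivable _ _ _ (fun q => (\det (M q))^-1 * adj q)).
  near=> q; have Mq : M q \in unitmx by near: q.
  by rewrite /invmx Mq; rewrite [RHS]mxE [(\adj _) _ _]mxE.
apply: (@cderivableM _ _ p (fun q => (\det (M q))^-1) adj).
  by apply: (cderivableV _ (cderivable_det dM)); rewrite -unitfE -unitmxE.
apply: cderivableM (cderivable_cst _ _) (cderivable_det _) => a b.
by under eq_fun do rewrite !mxE; exact: dM.
Unshelve. all: by end_near.
Qed.

Lemma wirtinger_invmx a b c :
  \matrix_(i, j) wirtinger a b c (fun q => invmx (M q) i j) p
    = - (invmx (M p) *m \matrix_(i, j) wirtinger a b c (fun q => M q i j) p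
          *m invmx (M p)).
Proof.
set dI := \matrix_(i, j) _; set dM' := \matrix_(i, j) _.
have leibniz : M p *m dI + dM' *m invmx (M p) = 0.
  apply/matrixP => i j; rewrite !mxE -big_split /=.
  have W0 : wirtinger a b c (fun q => \sum_k M q i k * invmx (M q) k j) p = 0.
    rewrite (@near_eq_wirtinger _ _ _ _ _ _ _ (fun _ => (i == j)%:R)).
      exact: wirtinger_cst.
    near=> q; have Mq : M q \in unitmx by near: q.
    transitivity ((M q *m invmx (M q)) i j); first by rewrite mxE.
    by rewrite mulmxV // mxE.
  rewrite -[RHS]W0 wirtinger_sum => [|k]; last first.
    exact: cderivableM (dM i k) (cderivable_invmx k j).
  apply: eq_bigr => k _; rewrite (wirtingerM _ _ _ (dM i k) (cderivable_invmx k j)) !mxE.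
  by rewrite addrC.
have -> : dI = invmx (M p) *m (M p *m dI) by rewrite mulmxA mulVmx ?mul1mx.
have -> : M p *m dI = - (dM' *m invmx (M p)) by apply/eqP; rewrite -addr_eq0 leibniz.
by rewrite mulmxN mulmxA.
Unshelve. all: by end_near.
Qed.

End InverseMatrix.

Section WirtingerCoordinates.
Variables (R : realType) (n : nat).
Local Notation V := 'rV[R]_(n + n).
Implicit Types (F : V -> R[i]) (k : 'I_n).

Definition coord_dirs : set V := range (@rdir R n).

Lemma coord_lshift k : coord_dirs (rdir R (lshift n k)).
Proof. by exists (lshift n k). Qed.

Lemma coord_rshift k : coord_dirs (rdir R (rshift n k)).
Proof. by exists (rshift n k). Qed.

Lemma dzE k F : dz k F = wirtinger (rdir R (lshift n k)) (rdir R (rshift n k)) (- 'i) F.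
Proof. by apply/funext => p; rewrite /dz /wirtinger mulNr. Qed.

Lemma dzbE k F : dzb k F = wirtinger (rdir R (lshift n k)) (rdir R (rshift n k)) 'i F.
Proof. by []. Qed.

Lemma smooth_cdifferentiable2 (U : set V) F p : open U -> U p ->
  smooth_on U (fun q => complex.Re (F q)) -> smooth_on U (fun q => complex.Im (F q)) ->
  cdifferentiable2 coord_dirs F p.
Proof.
move=> Uo Up sRe sIm; split.
  near=> q; have Uq : U q by near: q; apply: open_nbhs_nbhs.
  by split; [exact: (sRe [::] q Uq) | exact: (sIm [::] q Uq)].
by move=> _ [j _ <-]; split; [exact: (sRe [:: j] p Up) | exact: (sIm [:: j] p Up)].
Unshelve. all: by end_near.
Qed.

End WirtingerCoordinates.

Definition torsion (R : realType) (n : nat) (h : 'rV[R]_(n + n) -> 'M[R[i]]_n)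
  (i k m : 'I_n) (p : 'rV[R]_(n + n)) : R[i] :=
  dz i (hent h k m) p - dz k (hent h i m) p.

Section HermitianMetric.
Variables (R : realType) (n : nat).
Local Notation V := 'rV[R]_(n + n).
Variables (U : set V) (h : V -> 'M[R[i]]_n) (p : V).
Hypotheses (U_open : open U) (h_metric : hermitian_metric U h) (Up : U p).

Let near_U : \forall q \near p, U q.
Proof. exact: open_nbhs_nbhs. Qed.

Let h_herm q : U q -> forall a b, h q b a = conjc (h q a b).
Proof. by move=> Uq; case: (h_metric.2 q Uq). Qed.

Let h_pos q : U q -> forall v : 'I_n -> R[i], (exists i, v i != 0) ->
  0 < \sum_(i < n) \sum_(j < n) h q i j * v i * conjc (v j).
Proof. by move=> Uq; case: (h_metric.2 q Uq). Qed.

Let h_C2 a b : cdifferentiable2 (@coord_dirs R n) (hent h a b) p.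
Proof.
by have [sRe sIm] := h_metric.1 a b; exact: smooth_cdifferentiable2 U_open Up sRe sIm.
Qed.

Let h_cderivable a b : cderivable (hent h a b) p.
Proof. exact: cdifferentiable2_cderivable (h_C2 a b). Qed.

Let h_unit : \forall q \near p, h q \in unitmx.
Proof.
near=> q; have Uq : U q by near: q.
exact: posdef_unitmx (h_herm Uq) (h_pos Uq).
Unshelve. all: by end_near.
Qed.

Let hup_cderivable k l : cderivable (hup h k l) p.
Proof. exact: cderivable_invmx h_unit h_cderivable l k. Qed.

Let dz_cderivable i a b : cderivable (dz i (hent h a b)) p.
Proof.
rewrite dzE; apply: (cderivable_wirtinger (h_C2 a b)).
  exact: coord_lshift.
exact: coord_rshift.
Qed.

Let dzb_cderivable i a b : cderivable (dzb i (hent h a b)) p.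
Proof.
apply: (cderivable_wirtinger (h_C2 a b)); [exact: coord_lshift | exact: coord_rshift].
Qed.

Let wirtinger_hup a b c k l : wirtinger a b c (hup h k l) p =
  - \sum_(x < n) \sum_(m < n) hup h k x p * wirtinger a b c (hent h m x) p * hup h m l p.
Proof.
have := congr1 (fun M : 'M[R[i]]_n => M l k) (wirtinger_invmx h_unit h_cderivable a b c).
rewrite !mxE => ->; congr (- _); apply: eq_bigr => x _.
by rewrite mxE mulr_suml; apply: eq_bigr => m _; rewrite !mxE /hup; ring.
Qed.

Local Notation G := (fun a b => hup h a b p).
Local Notation A := (fun a b c => dz c (hent h a b) p).
Local Notation B := (fun a b c => dzb c (hent h a b) p).
Local Notation C := (fun a b c d => dz c (dzb d (hent h a b)) p).

Let dz_hup i k l : dz i (hup h k l) p = dGz_jet G A i k l.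
Proof.
rewrite dzE wirtinger_hup; congr (- _).
by do 2!(apply: eq_bigr => ? _); rewrite dzE.
Qed.

Let dzb_hup j k l : dzb j (hup h k l) p = dGzb_jet G B j k l.
Proof. by rewrite dzbE wirtinger_hup. Qed.

Let dzb_conj a b c : dzb c (hent h a b) p = conjc (dz c (hent h b a) p).
Proof.
have conj_mi : conjc (- 'i) = 'i :> R[i] by apply: complexP; rewrite /= ?oppr0 ?opprK.
rewrite dzE -(wirtingerJ _ _ _ (h_cderivable b a)) conj_mi dzbE.
apply: near_eq_wirtinger; near=> q; have Uq : U q by near: q.
by rewrite /hent (h_herm Uq b a).
Unshelve. all: by end_near.
Qed.

Let dzb_dz i j a b : dzb j (dz i (hent h a b)) p = dz i (dzb j (hent h a b)) p.
Proof.
rewrite [dz i (hent h a b)]dzE [dz i _]dzE !dzbE.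
by apply: (wirtinger_comm (h_C2 a b)); first [exact: coord_lshift | exact: coord_rshift].
Qed.

Let dzb_Gam i j k l : dzb j (Gam h i k l) p = dzb_Gam_jet G A B C j i k l.
Proof.
have dsum m : cderivable (fun q => dz i (hent h k m) q + dz k (hent h i m) q) p.
  by apply: cderivableD; apply: dz_cderivable.
have dterm m : cderivable (fun q =>
    hup h l m q * (dz i (hent h k m) q + dz k (hent h i m) q)) p.
  by apply: cderivableM; [apply: hup_cderivable | apply: dsum].
rewrite dzbE /Gam wirtingerMl; last by apply: cderivable_sum.
rewrite wirtinger_sum //; congr (_ * _); apply: eq_bigr => m _.
rewrite (wirtingerM _ _ _ (hup_cderivable l m) (dsum m)).
rewrite (wirtingerD _ _ _ (dz_cderivable i k m) (dz_cderivable k i m)) -!dzbE.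
by rewrite dzb_hup !dzb_dz.
Qed.

Let dz_Gamb i j k l : dz i (Gamb h j k l) p = dz_Gamb_jet G A B C i j k l.
Proof.
have ddiff m : cderivable (fun q => dzb j (hent h k m) q - dzb m (hent h k j) q) p.
  by apply: cderivableB; apply: dzb_cderivable.
have dterm m : cderivable (fun q =>
    hup h l m q * (dzb j (hent h k m) q - dzb m (hent h k j) q)) p.
  by apply: cderivableM; [apply: hup_cderivable | apply: ddiff].
rewrite dzE /Gamb wirtingerMl; last by apply: cderivable_sum.
rewrite wirtinger_sum //; congr (_ * _); apply: eq_bigr => m _.
rewrite (wirtingerM _ _ _ (hup_cderivable l m) (ddiff m)).
rewrite (wirtingerB _ _ _ (dzb_cderivable j k m) (dzb_cderivable m k j)) -!dzE.
by rewrite dz_hup.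
Qed.

Lemma Theta_defect_at i j :
  Theta2 h i j p - (2%:R * R1 h i j p - Theta1 h i j p)
    = torsion_sq_jet G A B i j - Lambda_ddbar h i j p.
Proof.
have -> : R1 h i j p = R1_jet G A B C i j.
  by apply: eq_bigr => k _; rewrite /Rc dzb_Gam dz_Gamb.
exact: Theta_defect_jet.
Qed.

Let torsion_sq_hs_dot i j : torsion_sq_jet G A B i j
  = hs_dot (h p) (fun k m => torsion h i k m p) (fun k m => torsion h j k m p).
Proof. by do 4!(apply: eq_bigr => ? _); rewrite !dzb_conj rmorphB. Qed.

Let kahler_torsion :
  (forall i j k, dz k (hent h i j) p = dz i (hent h k j) p /\
                 dzb k (hent h i j) p = dzb j (hent h i k) p) <->
  (forall i k m, torsion h i k m p = 0).
Proof.
split=> [K i k m | T0 i j k]; first by rewrite /torsion (K k m i).1 subrr.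
have dzC a b c : dz c (hent h a b) p = dz a (hent h c b) p.
  by apply/eqP; rewrite eq_sym -subr_eq0; apply/eqP; exact: T0.
by split; rewrite ?dzb_conj dzC.
Qed.

Hypothesis L0 : forall i j, Lambda_ddbar h i j p = 0.

Lemma Theta_defect_psd :
  psd (fun i j => Theta2 h i j p - (2%:R * R1 h i j p - Theta1 h i j p)).
Proof.
move=> v.
under eq_bigr do under eq_bigr do rewrite Theta_defect_at L0 subr0 torsion_sq_hs_dot.
have := hs_dot_ge0 (h_herm Up) (h_pos Up) (fun k m => \sum_(i < n) v i * torsion h i k m p).
by rewrite hs_dot_comb.
Qed.

Lemma Theta_defect_eq0_kahler :
  (forall i j, 2%:R * R1 h i j p - Theta1 h i j p = Theta2 h i j p) <->
  (forall i j k, dz k (hent h i j) p = dz i (hent h k j) p /\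
                 dzb k (hent h i j) p = dzb j (hent h i k) p).
Proof.
rewrite kahler_torsion; split=> [defect0 i | T0 i j].
  apply: (hs_dot_eq0 (h_herm Up) (h_pos Up)).
  by rewrite -torsion_sq_hs_dot -[LHS]subr0 -(L0 i i) -Theta_defect_at defect0 subrr.
apply/eqP; rewrite eq_sym -subr_eq0 Theta_defect_at L0 subr0 torsion_sq_hs_dot.
by rewrite /hs_dot big1 // => k _; do 3!(rewrite big1 // => ? _); rewrite T0 mulr0 mul0r.
Qed.

End HermitianMetric.

Unset Implicit Arguments.

Theorem lemma4p2 (R : realType) (n : nat) (U : set 'rV[R]_(n + n))
  (h : 'rV[R]_(n + n) -> 'M[R[i]]_n) :
  open U -> hermitian_metric U h -> Lddbar_zero U h ->
  (forall p, U p ->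
     psd (fun i j => Theta2 h i j p - (2%:R * R1 h i j p - Theta1 h i j p))) /\
  ((forall p, U p -> forall i j : 'I_n,
      2%:R * R1 h i j p - Theta1 h i j p = Theta2 h i j p)
   <-> kahler_on U h).
Proof.
move=> U_open h_metric L0; split=> [p Up|].
  exact: Theta_defect_psd U_open h_metric Up (L0 p Up).
split=> [defect0 p Up | K p Up].
  by apply/(Theta_defect_eq0_kahler U_open h_metric Up (L0 p Up)); exact: defect0.
by apply/(Theta_defect_eq0_kahler U_open h_metric Up (L0 p Up)); exact: K.
Qed.
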